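(* Let $n\ge 1$ and let $P_n$ be the path on $n$ vertices. Then $$v(P_n)=\begin{cases}\lfloor n/4\rfloor & \text{if } n\equiv 0,1 \pmod 4,\\ \lfloor n/4\rfloor+1 & \text{if } n\equiv 2,3 \pmod 4.\end{cases}$$
   Context: Let $K$ be a field and $S=K[x_1,\dots,x_t]$ with the standard grading. For a proper graded ideal $I\subset S$, $\operatorname{Ass}(I)$ is the set of associated primes of $S/I$, and the $v$-number of $I$ is $v(I)=\min\{k\ge 0 : \exists f\in S_k \text{ and } \mathcal P\in\operatorname{Ass}(I) \text{ with } (I:f)=\mathcal P\}$. For a finite simple graph $G$ on vertex set $\{x_1,\dots,x_t\}$, the edge ideal is $I(G)=\langle x_ix_j : \{x_i,x_j\}\text{ an edge of } G\rangle\subset S$, and $v(G):=v(I(G))$. The path $P_n$ has vertices $x_1,\dots,x_n$ and edges $\{x_i,x_{i+1}\}$ for $1\le i\le n-1$. $\lfloor\cdot\rfloor$ is the integer part. *)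

From HB Require Import structures.
From mathcomp Require Import all_boot all_order all_algebra.
From mathcomp Require Import mpoly.
Set Implicit Arguments. Unset Strict Implicit. Unset Printing Implicit Defensive.
Import Order.TTheory GRing.Theory.
Local Open Scope ring_scope.

Section Ideals.
Variables (K : fieldType) (t : nat).
Local Notation S := {mpoly K[t]}.

Definition is_ideal (I : S -> Prop) : Prop :=
  [/\ I 0, (forall f g, I f -> I g -> I (f + g)) & (forall f g, I g -> I (f * g))].

Definition ideal_gen (gens : seq S) : S -> Prop :=
  fun f => exists c : 'I_(size gens) -> S, f = \sum_(i < size gens) c i * gens`_i.

Definition colon (I : S -> Prop) (f : S) : S -> Prop := fun g => I (g * f).

Definition is_prime_ideal (P : S -> Prop) : Prop :=
  [/\ is_ideal P, ~ P 1 & (forall f g, P (f * g) -> P f \/ P g)].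

Definition Ass (I : S -> Prop) (P : S -> Prop) : Prop :=
  is_prime_ideal P /\ exists g : S, forall h, P h <-> colon I g h.

(* k is attained in the set defining v(I): some f in S_k (homogeneous of
   degree k) and some P in Ass(I) with (I : f) = P. *)
Definition vnum_witness (I : S -> Prop) (k : nat) : Prop :=
  exists f : S, f \is k.-homog /\
    exists P, Ass I P /\ (forall h, colon I f h <-> P h).

Definition vnumber_is (I : S -> Prop) (k : nat) : Prop :=
  vnum_witness I k /\ (forall k', (k' < k)%N -> ~ vnum_witness I k').

(* Edge ideal of a simple graph on vertex set {x_0,...,x_(t-1)} given by a
   symmetric irreflexive relation e on 'I_t. *)
Definition edge_ideal (e : rel 'I_t) : S -> Prop :=
  ideal_gen [seq 'X_ij.1 * 'X_ij.2 | ij <- enum [pred ij : 'I_t * 'I_t | e ij.1 ij.2]].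

End Ideals.

Definition path_rel (n : nat) : rel 'I_n :=
  fun i j => ((i : nat).+1 == j) || ((j : nat).+1 == i).

Definition vP_formula (n : nat) : nat :=
  if (n %% 4 == 0)%N || (n %% 4 == 1)%N then (n %/ 4)%N else (n %/ 4).+1.

From HB Require Import structures.
From mathcomp Require Import all_boot all_order all_algebra.
From mathcomp Require Import mpoly zify.

(* As in Jaramillo and Villarreal, v(I(G)) is governed by the independent sets A
   of G whose neighbourhood N(A) is a vertex cover. If (I : f) is a prime P with f
   homogeneous of degree k, some monomial x^m of f lies outside I; every variable
   in P is adjacent to the support of m, and P contains a variable of each edge,
   so N(supp m) is a vertex cover and |supp m| <= k. Conversely, for such an A the
   colon ideal (I : prod_{a in A} x_a) is the prime ideal generated by the
   variables of N(A).
   On P_n each vertex of A has at most two neighbours, each covering at most two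
   of the n - 1 edges, so 4|A| >= n - 1; the set {x_3, x_7, x_11, ...}, together
   with x_n when n = 2 mod 4, attains this bound. *)

Set Implicit Arguments. Unset Strict Implicit. Unset Printing Implicit Defensive.
Import Order.TTheory GRing.Theory.

Section Monomials.
Variable t : nat.

Definition mnm_upset (pr : pred 'X_{1..t}) : Prop :=
  forall m1 m2, pr m2 -> pr (m1 + m2)%MM.

Definition mnm_prime (pr : pred 'X_{1..t}) : Prop :=
  ~~ pr 0%MM /\ forall m1 m2, pr (m1 + m2)%MM -> pr m1 || pr m2.

Definition mnm_of_set (A : {set 'I_t}) : 'X_{1..t} := [multinom (i \in A : nat) | i < t].

Definition mnm_supp (m : 'X_{1..t}) : {set 'I_t} := [set i | 0 < m i].

Definition mnm_meets (C : {set 'I_t}) (m : 'X_{1..t}) : bool := [exists v in C, 0 < m v].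

Lemma mnm_of_setE A i : mnm_of_set A i = (i \in A).
Proof. by rewrite mnmE. Qed.

Lemma mdeg_mnm_of_set A : mdeg (mnm_of_set A) = #|A|.
Proof.
by rewrite mdegE -sum1_card [RHS]big_mkcond; apply: eq_bigr => i _; rewrite mnm_of_setE.
Qed.

Lemma card_mnm_supp m : #|mnm_supp m| <= mdeg m.
Proof.
rewrite mdegE -sum1_card big_mkcond; apply: leq_sum => i _.
by rewrite inE; case: posnP.
Qed.

Lemma mnm_meets_upset C : mnm_upset (mnm_meets C).
Proof.
move=> m1 m2 /exists_inP [v Cv m2v]; apply/exists_inP; exists v => //.
by rewrite mnmDE; lia.
Qed.

Lemma mnm_meets_prime C : mnm_prime (mnm_meets C).
Proof.
split; first by apply/exists_inP => -[v _]; rewrite mnm0E.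
move=> m1 m2 /exists_inP [v Cv]; rewrite mnmDE => m12v.
by apply/orP; case: (posnP (m1 v)) => m1v; [right | left]; apply/exists_inP; exists v => //; lia.
Qed.

End Monomials.

Section Graph.
Variables (t : nat) (e : rel 'I_t).

Definition nbhd (A : {set 'I_t}) : {set 'I_t} := [set v | [exists a in A, e v a]].

Definition vertex_cover (C : {set 'I_t}) : Prop := forall i j, e i j -> (i \in C) || (j \in C).

Definition independent (A : {set 'I_t}) : Prop := forall i j, i \in A -> j \in A -> ~~ e i j.

Definition mnm_has_edge (m : 'X_{1..t}) : bool :=
  [exists i, exists j, [&& e i j, 0 < m i & 0 < m j]].

Lemma mnm_has_edge_upset : mnm_upset mnm_has_edge.
Proof.
move=> m1 m2 /existsP [i /existsP [j /and3P [eij m2i m2j]]].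
by apply/existsP; exists i; apply/existsP; exists j; rewrite eij !mnmDE; lia.
Qed.

Hypotheses (e_irr : irreflexive e) (e_sym : ssrbool.symmetric e).

Lemma mem_nbhd_supp_addU v m :
  mnm_has_edge (U_(v) + m)%MM -> ~~ mnm_has_edge m -> v \in nbhd (mnm_supp m).
Proof.
case/existsP=> i /existsP [j /and3P [eij]]; rewrite !mnmDE !mnm1E => mi mj mN.
have ij : i != j by apply: contraTneq eij => ->; rewrite e_irr.
rewrite inE; apply/exists_inP.
have [vi | vi] := eqVneq v i; first subst v.
  by exists j; rewrite // inE; move: mj; rewrite (negbTE ij).
have [vj | vj] := eqVneq v j.
  by subst v; exists i; [rewrite inE; move: mi; rewrite (negbTE vi) | rewrite e_sym].
case/negP: mN; apply/existsP; exists i; apply/existsP; exists j; rewrite eij.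
by move: mi mj; rewrite (negbTE vi) (negbTE vj) => /= -> ->.
Qed.

Lemma mnm_has_edge_add_set A : independent A -> vertex_cover (nbhd A) ->
  (fun m => mnm_has_edge (mnm_of_set A + m)%MM) =1 mnm_meets (nbhd A).
Proof.
move=> indA coverA m; apply/existsP/exists_inP.
- case=> i /existsP [j /and3P [eij]]; rewrite !mnmDE !mnm_of_setE.
  have [Ai | Ai] := boolP (i \in A); have [Aj | Aj] := boolP (j \in A) => //= mi mj.
  + by have := indA _ _ Ai Aj; rewrite eij.
  + by exists j; rewrite // inE; apply/exists_inP; exists i; rewrite // e_sym.
  + by exists i; rewrite // inE; apply/exists_inP; exists j.
  + by case/orP: (coverA _ _ eij) => [Ni | Nj]; [exists i | exists j].
- case=> v /[!inE] /exists_inP [a Aa eva] mv.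
  by exists v; apply/existsP; exists a; rewrite eva !mnmDE !mnm_of_setE Aa; lia.
Qed.

End Graph.

Section Ideals.
Variables (K : fieldType) (t : nat).
Local Notation S := {mpoly K[t]}.
Local Open Scope ring_scope.

Lemma ideal_sum (J : S -> Prop) (I : Type) (r : seq I) (P : pred I) (F : I -> S) :
  is_ideal J -> (forall i, P i -> J (F i)) -> J (\sum_(i <- r | P i) F i).
Proof. by case=> J0 JD _ JF; apply: big_ind. Qed.

Lemma ideal_gen_ideal (gens : seq S) : is_ideal (ideal_gen gens).
Proof.
split.
- by exists (fun _ => 0); rewrite big1 // => i _; rewrite mul0r.
- move=> _ _ [c1 ->] [c2 ->]; exists (fun i => c1 i + c2 i).
  by rewrite -big_split; apply: eq_bigr => i _; rewrite mulrDl.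
- move=> f _ [c ->]; exists (fun i => f * c i).
  by rewrite mulr_sumr; apply: eq_bigr => i _; rewrite mulrA.
Qed.

Lemma ideal_gen_mem (gens : seq S) (g : S) : g \in gens -> ideal_gen gens g.
Proof.
move=> gg; have lt_g : (index g gens < size gens)%N by rewrite index_mem.
exists (fun i => ((i == Ordinal lt_g)%:R : S)).
rewrite (bigD1 (Ordinal lt_g)) //= eqxx mul1r nth_index // big1 ?addr0 // => i /negbTE ->.
by rewrite mul0r.
Qed.

Lemma ideal_gen_min (gens : seq S) (J : S -> Prop) :
  is_ideal J -> (forall g, g \in gens -> J g) -> forall f, ideal_gen gens f -> J f.
Proof.
move=> idJ Jgens f [c ->]; apply: ideal_sum => // i _.
by case: idJ => _ _ JM; apply/JM/Jgens/mem_nth.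
Qed.

Lemma prime_ideal_ext (P Q : S -> Prop) :
  (forall f, P f <-> Q f) -> is_prime_ideal Q -> is_prime_ideal P.
Proof.
move=> PQ [[Q0 QD QM] Q1 Qprime]; split; first split.
- exact/PQ.
- by move=> f g /PQ Pf /PQ Pg; apply/PQ/QD.
- by move=> f g /PQ Pg; apply/PQ/QM.
- by move/PQ.
- by move=> f g /PQ /Qprime [] /PQ; [left | right].
Qed.

Definition monomial_ideal (pr : pred 'X_{1..t}) : S -> Prop :=
  fun f => all pr (msupp f).

Section MonomialIdeal.
Variable pr : pred 'X_{1..t}.

Lemma monomial_idealX m : monomial_ideal pr 'X_[m] <-> pr m.
Proof. by rewrite /monomial_ideal msuppX /= andbT. Qed.

Lemma monomial_idealMX f m :
  monomial_ideal pr (f * 'X_[m]) <-> monomial_ideal (fun m' => pr (m + m')%MM) f.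
Proof. by rewrite /monomial_ideal (perm_all _ (msuppMX f m)) all_map. Qed.

Definition mnm_drop (f : S) : S := \sum_(m <- msupp f | ~~ pr m) f@_m *: 'X_[m].

Lemma mcoeff_drop f m : (mnm_drop f)@_m = if pr m then 0 else f@_m.
Proof.
rewrite {2}(mpolyE f) /mnm_drop !raddf_sum /= big_mkcond /=.
have coeffX m' c : (c *: 'X_[m'] : S)@_m = if m' == m then c else 0.
  by rewrite mcoeffZ mcoeffX; case: eqP; rewrite ?mulr0 ?mulr1.
case: ifP => prm; [rewrite big1 // => m' _ | apply: eq_bigr => m' _];
  case: ifP => // prm'; rewrite coeffX; case: eqP => // eq_m; by rewrite eq_m prm in prm'.
Qed.

Lemma msupp_drop f m : m \in msupp (mnm_drop f) -> ~~ pr m.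
Proof. by rewrite mcoeff_msupp mcoeff_drop; case: (pr m); rewrite ?eqxx. Qed.

Lemma mnm_dropB : {morph mnm_drop : f g / f - g}.
Proof.
by move=> f g; apply/mpolyP => m; rewrite mcoeffB !mcoeff_drop mcoeffB; case: ifP; rewrite ?subr0.
Qed.

Lemma monomial_idealP f : monomial_ideal pr f <-> mnm_drop f = 0.
Proof.
split=> [/allP prf | f0].
  apply/mpolyP => m; rewrite mcoeff_drop mcoeff0; case: ifP => // prm.
  by apply/memN_msupp_eq0; apply: contraFN prm => /prf.
apply/allP => m; rewrite mcoeff_msupp; apply: contraNT => prm.
by move: (mcoeff_drop f m); rewrite (negbTE prm) f0 mcoeff0 => <-.
Qed.

Lemma mnm_drop_id f : all (predC pr) (msupp f) -> mnm_drop f = f.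
Proof.
move=> /allP fN; apply/mpolyP => m; rewrite mcoeff_drop; case: ifP => // prm.
by apply/esym/memN_msupp_eq0; apply: contraTN prm => /fN.
Qed.

Lemma monomial_ideal_sub_drop f : monomial_ideal pr (f - mnm_drop f).
Proof.
apply/monomial_idealP/mpolyP => m; rewrite mcoeff_drop mcoeffB mcoeff_drop mcoeff0.
by case: (pr m); rewrite ?subrr.
Qed.

Hypothesis pr_upset : mnm_upset pr.

Lemma monomial_ideal_ideal : is_ideal (monomial_ideal pr).
Proof.
split.
- by rewrite /monomial_ideal msupp0.
- move=> f g /allP prf /allP prg; apply/allP => m /msuppD_le.
  by rewrite mem_cat => /orP [/prf | /prg].
- move=> f g /allP prg; apply/allP => _ /msuppM_le /allpairsP [[m1 m2] /= [_ /prg pr2 ->]].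
  exact: pr_upset.
Qed.

Hypothesis pr_prime : mnm_prime pr.

(* [mnm_drop] is the projection of S onto the span of the monomials outside [pr],
   i.e. the quotient map by [monomial_ideal pr]; for prime [pr] it is
   multiplicative. *)
Lemma mnm_dropM f g : mnm_drop (f * g) = mnm_drop f * mnm_drop g.
Proof.
have [_ pr_split] := pr_prime; have [_ idD idM] := monomial_ideal_ideal.
set f' := mnm_drop f; set g' := mnm_drop g.
have : monomial_ideal pr (f * g - f' * g').
  have -> : f * g - f' * g' = g * (f - f') + f' * (g - g').
    by rewrite !mulrBr [g * f]mulrC [g * f']mulrC addrA subrK.
  by apply: idD; apply: idM; apply: monomial_ideal_sub_drop.
move/monomial_idealP/eqP; rewrite mnm_dropB subr_eq0 => /eqP ->.
apply: mnm_drop_id; apply/allP => _ /msuppM_le /allpairsP [[m1 m2] /= [f'm1 g'm2 ->]].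
apply/negP => /pr_split /orP [].
- by apply/negP; apply: msupp_drop f'm1.
- by apply/negP; apply: msupp_drop g'm2.
Qed.

Lemma monomial_ideal_prime : is_prime_ideal (monomial_ideal pr).
Proof.
have [pr0 _] := pr_prime; split; first exact: monomial_ideal_ideal.
  by rewrite -mpolyX0 => /monomial_idealX; apply/negP.
move=> f g /monomial_idealP; rewrite mnm_dropM => /eqP; rewrite mulf_eq0.
by case/orP => /eqP /monomial_idealP; [left | right].
Qed.

End MonomialIdeal.
End Ideals.

Section EdgeIdeal.
Variables (K : fieldType) (t : nat) (e : rel 'I_t).
Hypotheses (e_irr : irreflexive e) (e_sym : ssrbool.symmetric e).
Local Notation S := {mpoly K[t]}.
Local Open Scope ring_scope.
Local Notation I := (@edge_ideal K t e).
Local Notation edge_gens :=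
  ([seq 'X_ij.1 * 'X_ij.2 | ij <- enum [pred ij : 'I_t * 'I_t | e ij.1 ij.2]] : seq S).

Lemma edge_gens_mem i j : e i j -> 'X_i * 'X_j \in edge_gens.
Proof. by move=> eij; apply/mapP; exists (i, j); rewrite ?mem_enum. Qed.

Lemma edge_idealE (f : S) : I f <-> monomial_ideal (mnm_has_edge e) f.
Proof.
split.
- apply: ideal_gen_min; first exact/monomial_ideal_ideal/mnm_has_edge_upset.
  move=> g /mapP [[i j]]; rewrite mem_enum inE /= => eij ->.
  rewrite -mpolyXD; apply/monomial_idealX.
  by apply/existsP; exists i; apply/existsP; exists j; rewrite eij !mnmDE !mnm1E !eqxx; lia.
- move=> /allP Ef; rewrite (mpolyE f) big_seq; apply: ideal_sum; first exact: ideal_gen_ideal.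
  move=> m /Ef /existsP [i /existsP [j /and3P [eij mi mj]]].
  have ij : i != j by apply: contraTneq eij => ->; rewrite e_irr.
  have le_ij : (U_(i) + U_(j) <= m)%MM.
    apply/mnm_lepP => k; rewrite !mnmDE !mnm1E.
    case: (i =P k) => [?|_]; case: (j =P k) => [?|_]; subst; rewrite ?eqxx in ij * => //=; lia.
  rewrite -(submK le_ij) mpolyXD scalerAl; have [_ _ idM] := ideal_gen_ideal edge_gens.
  by apply/idM/ideal_gen_mem; rewrite mpolyXD; apply: edge_gens_mem.
Qed.

Lemma colon_edge_idealX A h : independent e A -> vertex_cover e (nbhd e A) ->
  colon I 'X_[mnm_of_set A] h <-> monomial_ideal (mnm_meets (nbhd e A)) h.
Proof.
move=> indA coverA.
have meetsE : monomial_ideal (fun m => mnm_has_edge e (mnm_of_set A + m)%MM) h <->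
              monomial_ideal (mnm_meets (nbhd e A)) h.
  by rewrite /monomial_ideal (eq_all (mnm_has_edge_add_set e_sym indA coverA)).
by split=> [/edge_idealE/monomial_idealMX/meetsE | /meetsE/monomial_idealMX/edge_idealE].
Qed.

Lemma vnum_witness_of_independent A : independent e A -> vertex_cover e (nbhd e A) ->
  vnum_witness I #|A|.
Proof.
move=> indA coverA; exists 'X_[mnm_of_set A]; split; first by rewrite dhomogX /= mdeg_mnm_of_set.
exists (colon I 'X_[mnm_of_set A]); split=> //; split; last by exists 'X_[mnm_of_set A].
apply: prime_ideal_ext (fun h => colon_edge_idealX h indA coverA) _.
exact/monomial_ideal_prime/mnm_meets_prime/mnm_meets_upset.
Qed.

Lemma nbhd_cover_of_vnum_witness k : vnum_witness I k ->
  exists2 A : {set 'I_t}, vertex_cover e (nbhd e A) & (#|A| <= k)%N.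
Proof.
case=> f [homf [P [[[_ P1 Pprime] _] Pf]]].
have [m fm Nm] : exists2 m, m \in msupp f & ~~ mnm_has_edge e m.
  apply/hasP; rewrite has_predC; apply/negP => /edge_idealE If.
  by apply/P1/Pf; rewrite /colon mul1r.
exists (mnm_supp m); last by move/dhomogP: homf => /(_ m fm) <-; apply: card_mnm_supp.
have Pv v : P 'X_v -> v \in nbhd e (mnm_supp m).
  move=> /Pf; rewrite /colon mulrC => /edge_idealE/monomial_idealMX/allP/(_ m fm) Em.
  exact: mem_nbhd_supp_addU Em Nm.
move=> i j eij; have [_ _ idM] := ideal_gen_ideal edge_gens.
have : P ('X_i * 'X_j) by apply/Pf; rewrite /colon mulrC; apply/idM/ideal_gen_mem/edge_gens_mem.
by case/Pprime => /Pv ->; rewrite ?orbT.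
Qed.

End EdgeIdeal.

Definition path_nbhd (a : nat -> bool) (j : nat) : bool :=
  ((0 < j) && a j.-1) || a j.+1.

Lemma leq_sum_path_nbhd (a : nat -> bool) (N : nat) : a N = false ->
  \sum_(0 <= j < N) path_nbhd a j <= 2 * \sum_(0 <= j < N) a j.
Proof.
case: N => [|N] aN; first by rewrite big_geq.
have left_nbhd : \sum_(0 <= j < N.+1) ((0 < j) && a j.-1) <= \sum_(0 <= j < N.+1) a j.
  by rewrite big_nat_recl // big_nat_recr //=; lia.
have right_nbhd : \sum_(0 <= j < N.+1) a j.+1 <= \sum_(0 <= j < N.+1) a j.
  by rewrite big_nat_recr //= aN big_nat_recl //=; lia.
suff : \sum_(0 <= j < N.+1) path_nbhd a j <=
       \sum_(0 <= j < N.+1) (((0 < j) && a j.-1) + a j.+1) by rewrite big_split /=; lia.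
by apply: leq_sum => j _; rewrite /path_nbhd; lia.
Qed.

Lemma path_edges_leq_cover (c : nat -> bool) (N : nat) :
  (forall i, i.+1 < N -> c i || c i.+1) -> N.-1 <= 2 * \sum_(0 <= j < N) c j.
Proof.
case: N => [|N] cover //=.
have edges : N <= \sum_(0 <= i < N) (c i + c i.+1).
  apply: (@leq_trans (\sum_(0 <= i < N) 1)); first by rewrite sum_nat_const_nat; lia.
  rewrite big_seq_cond [X in _ <= X]big_seq_cond.
  by apply: leq_sum => i /andP [/[!mem_index_iota] /andP [_ /cover]]; lia.
have lo : \sum_(0 <= i < N) c i <= \sum_(0 <= j < N.+1) c j by rewrite big_nat_recr //=; lia.
have hi : \sum_(0 <= i < N) c i.+1 <= \sum_(0 <= j < N.+1) c j by rewrite big_nat_recl //=; lia.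
by move: edges; rewrite big_split /=; lia.
Qed.

Lemma path_edges_leq_nbhd_cover (a : nat -> bool) (N : nat) : a N = false ->
  (forall i, i.+1 < N -> path_nbhd a i || path_nbhd a i.+1) ->
  N.-1 <= 4 * \sum_(0 <= j < N) a j.
Proof. by move=> /leq_sum_path_nbhd le_nbhd /path_edges_leq_cover; lia. Qed.

Lemma count_mod4_eq2 N : \sum_(0 <= j < N) (j %% 4 == 2) = N.+1 %/ 4.
Proof. by elim: N => [|N IH]; [rewrite big_geq | rewrite big_nat_recr //= IH; lia]. Qed.

Section PathGraph.
Variable n : nat.
Local Notation P := (@path_rel n).

Lemma path_rel_irr : irreflexive P.
Proof. by move=> i; rewrite /path_rel; lia. Qed.

Lemma path_rel_sym : ssrbool.symmetric P.
Proof. by move=> i j; rewrite /path_rel orbC. Qed.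

Lemma vP_formula_leq_nbhd_cover (A : {set 'I_n}) :
  vertex_cover P (nbhd P A) -> vP_formula n <= #|A|.
Proof.
move=> coverA; pose a j := [exists i in A, val i == j].
have aE (i : 'I_n) : a i = (i \in A).
  by apply/exists_inP/idP => [[i' Ai' /eqP/val_inj <-] | Ai]; last exists i.
have a_n : a n = false.
  by apply/negbTE/exists_inP => -[i _ /eqP i_n]; move: (ltn_ord i); rewrite i_n ltnn.
have nbhd_path (i : 'I_n) : i \in nbhd P A -> path_nbhd a i.
  rewrite inE => /exists_inP [j Aj] /orP [] /eqP ij; rewrite -aE in Aj; rewrite /path_nbhd.
  - by rewrite -ij /= in Aj; rewrite Aj orbT.
  - by rewrite -ij /= Aj.
have cover i : i.+1 < n -> path_nbhd a i || path_nbhd a i.+1.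
  move=> lt_i1; have lt_i : i < n by lia.
  have /coverA : P (Ordinal lt_i) (Ordinal lt_i1) by rewrite /path_rel /= eqxx.
  by case/orP => /nbhd_path /= ->; rewrite ?orbT.
have sumA : \sum_(0 <= j < n) a j = #|A|.
  by rewrite big_mkord -sum1_card [RHS]big_mkcond; apply: eq_bigr => i _; rewrite aE.
by have := path_edges_leq_nbhd_cover a_n cover; rewrite sumA /vP_formula; case: ifP; lia.
Qed.

(* With 0-based indices: the vertices x_3, x_7, x_11, ... of the paper, and x_n
   when n = 2 mod 4. *)
Definition path_sel (j : nat) : bool := (j %% 4 == 2) || (j.+1 == n) && (n %% 4 == 2).

Definition path_sel_set : {set 'I_n} := [set i : 'I_n | path_sel i].

Lemma path_sel_independent : independent P path_sel_set.
Proof.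
move=> i j /[!inE]; rewrite /path_rel /path_sel.
by have := ltn_ord i; have := ltn_ord j; lia.
Qed.

Lemma path_sel_cover : vertex_cover P (nbhd P path_sel_set).
Proof.
have sel_mod x : x %% 4 = 2 -> path_sel x by rewrite /path_sel => ->.
have nbhd_succ (v : 'I_n) : v.+1 < n -> path_sel v.+1 -> v \in nbhd P path_sel_set.
  move=> lt_v1 sel_v1; rewrite inE; apply/exists_inP.
  by exists (Ordinal lt_v1); rewrite ?inE // /path_rel /= eqxx.
have nbhd_pred (v : 'I_n) : 0 < v -> path_sel v.-1 -> v \in nbhd P path_sel_set.
  move=> v_gt0 sel_v1; have lt_v1 : v.-1 < n by have := ltn_ord v; lia.
  by rewrite inE; apply/exists_inP; exists (Ordinal lt_v1); rewrite ?inE // /path_rel /=; lia.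
suff cover_succ (i j : 'I_n) :
    i.+1 == j -> (i \in nbhd P path_sel_set) || (j \in nbhd P path_sel_set).
  by move=> i j /orP [/cover_succ // | /cover_succ]; rewrite orbC.
move=> /eqP ij; have lt_i1 : i.+1 < n by rewrite ij.
have : i %% 4 < 4 by rewrite ltn_mod.
case r_i : (i %% 4) => [|[|[|[|r]]]] // _.
- have [lt_j1 | ge_j1] := ltnP j.+1 n.
    by apply/orP; right; apply: nbhd_succ => //; apply: sel_mod; lia.
  have lt_j := ltn_ord j; apply/orP; left; apply: nbhd_succ => //.
  by apply/orP; right; apply/andP; split; apply/eqP; lia.
- by apply/orP; left; apply: nbhd_succ => //; apply: sel_mod; lia.
- by apply/orP; right; apply: nbhd_pred; [lia | rewrite -ij; apply: sel_mod].
- by apply/orP; left; apply: nbhd_pred; [lia | apply: sel_mod; lia].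
Qed.

Lemma card_path_sel_set : #|path_sel_set| = vP_formula n.
Proof.
rewrite -sum1_card big_mkcond (eq_bigr (fun i : 'I_n => nat_of_bool (path_sel i)));
  last by move=> i _; rewrite inE.
rewrite -(big_mkord xpredT (fun j => nat_of_bool (path_sel j))) /path_sel.
case: n => [|n']; first by rewrite big_geq.
rewrite big_nat_recr //= -(eq_big_nat _ _ (F1 := fun j => nat_of_bool (j %% 4 == 2))).
  by rewrite count_mod4_eq2 /vP_formula; case: ifP; lia.
by move=> j /andP [_ lt_j]; congr nat_of_bool; lia.
Qed.

End PathGraph.

Theorem theorem3p1 (K : fieldType) (n : nat) (hn : (1 <= n)%N) :
  vnumber_is (@edge_ideal K n (@path_rel n)) (vP_formula n).
Proof.
have [irr sym] := (@path_rel_irr n, @path_rel_sym n).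
split.
  rewrite -card_path_sel_set.
  apply: (vnum_witness_of_independent K irr sym).
    exact: path_sel_independent.
  exact: path_sel_cover.
move=> k lt_k witness_k; have [A coverA le_A_k] := nbhd_cover_of_vnum_witness irr sym witness_k.
by have := vP_formula_leq_nbhd_cover coverA; lia.
Qed.
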